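(* For all positive integers $T$ and $k$, \[ \mathrm{LCS}_T(2T-1,\mathcal P_k)\geq k^{1/\binom{2T-1}{T}}. \]
   Context: $\mathcal{P}_k$ is the set of permutations on $k$ letters (words over $\{1,\dots,k\}$ in which each letter occurs exactly once). For a set $\mathcal W$ of words, $\mathrm{LCS}(\mathcal W)$ is the length of a longest word that is a subsequence (letters in order, not necessarily consecutive) of every word in $\mathcal W$; $\mathrm{LCS}_T(\mathcal W)=\max\mathrm{LCS}(\mathcal W')$ over subsets $\mathcal W'\subset\mathcal W$ of size $T$; and for a family $\mathcal F$, $\mathrm{LCS}_T(t,\mathcal F)=\min\mathrm{LCS}_T(\mathcal W)$ over all $t$-element subsets $\mathcal W\subset\mathcal F$. *)

From mathcomp Require Import all_boot all_fingroup.
Set Implicit Arguments. Unset Strict Implicit. Unset Printing Implicit Defensive.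

(* The letters {1,...,k} are represented by 'I_k = {0,...,k-1}.
   A permutation s : {perm 'I_k} is identified with the word s(0) s(1) ... s(k-1),
   a word in which every letter occurs exactly once.  P_k = [set: {perm 'I_k}]. *)
Definition pword (k : nat) (s : {perm 'I_k}) : seq 'I_k :=
  [seq s i | i <- enum 'I_k].

(* LCS(W): the length of a longest word that is a subsequence of every word of W.
   (Any common subsequence of a nonempty W has length <= k, so the search
   over lengths n <= k is exhaustive for nonempty W.) *)
Definition LCS (k : nat) (W : {set {perm 'I_k}}) : nat :=
  \max_(n < k.+1 | [exists s : n.-tuple 'I_k,
                      [forall w in W, subseq (val s) (pword w)]]) n.

Definition LCS_T (k T : nat) (W : {set {perm 'I_k}}) : nat :=
  \max_(W' : {set {perm 'I_k}} | (W' \subset W) && (#|W'| == T)) LCS W'.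

(* LCS_T(t, P_k) = min of LCS_T(W) over t-element subsets W of P_k.
   (If there is no such subset the min is taken to be k, an upper bound
   of all LCS values.) *)
Definition LCS_T_Pk (k T t : nat) : nat :=
  \big[minn/k]_(W : {set {perm 'I_k}} | #|W| == t) LCS_T T W.

From mathcomp Require Import all_boot all_fingroup.
From Stdlib Require Import Reals.
From mathcomp Require Import zify.

Set Implicit Arguments. Unset Strict Implicit. Unset Printing Implicit Defensive.

(* Fix a family W of 2T-1 permutations.  For a T-subset S of W, order the
   letters by a <_S b iff a precedes b in every word of S, and let h_S(a) be
   the length of the longest <_S-chain below a.  A <_S-chain is a common
   subsequence of S, so h_S(a) < LCS(S) <= L := LCS_T(W).  For letters a != b,
   a majority of the 2T-1 words put them in the same order, so for some
   T-subset S they are <_S-comparable and h_S(a) != h_S(b).  Hence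
   a |-> (h_S(a))_S is an injection of the k letters into [0, L)^C with
   C = binom(2T-1, T), i.e. k <= L^C. *)

Lemma exists_subset_card (T : finType) (X : {set T}) n :
  n <= #|X| -> exists2 S : {set T}, S \subset X & #|S| = n.
Proof.
move=> le_nX; exists [set x in take n (enum X)].
  by apply/subsetP => x; rewrite inE => /mem_take; rewrite mem_enum.
rewrite cardsE; move/card_uniqP: (take_uniq n (enum_uniq (mem X))) => ->.
by rewrite size_takel // -cardE.
Qed.

Lemma exists_subset_homogeneous (T : finType) (A W : {set T}) n :
  #|W| = (2 * n).-1 ->
  exists2 S : {set T}, (S \subset W) && (#|S| == n) & (S \subset A) || (S \subset ~: A).
Proof.
move=> card_W.
have [le_n_WA | le_n_WA'] : n <= #|W :&: A| \/ n <= #|W :\: A|.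
  move: (cardsID A W); rewrite card_W -subn1.
  (* [lia] needs the two cardinals as opaque atoms *)
  by set i := #|_ :&: _|; set d := #|_ :\: _|; lia.
  have [S sub_S card_S] := exists_subset_card le_n_WA.
  exists S; first by rewrite card_S eqxx andbT (subset_trans sub_S) ?subsetIl.
  by rewrite (subset_trans sub_S) ?subsetIr.
have [S sub_S card_S] := exists_subset_card le_n_WA'.
exists S; first by rewrite card_S eqxx andbT (subset_trans sub_S) ?subsetDl.
by rewrite setDE in sub_S; rewrite orbC (subset_trans sub_S) ?subsetIr.
Qed.

Lemma sorted_ltn_subseq_enum n (u : seq 'I_n) :
  sorted (fun i j : 'I_n => i < j) u -> subseq u (enum 'I_n).
Proof.
move=> sorted_u.
have ltn_ord_trans : transitive (fun i j : 'I_n => i < j).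
  by move=> ???; exact: ltn_trans.
have sorted_enum : sorted (fun i j : 'I_n => i < j) (enum 'I_n).
  by have := iota_ltn_sorted 0 n; rewrite -val_enum_ord sorted_map.
suff -> : u = [seq i <- enum 'I_n | i \in u] by exact: filter_subseq.
apply: (irr_sorted_eq ltn_ord_trans) => //; first exact: ltnn.
  exact: sorted_filter.
by move=> i; rewrite mem_filter mem_enum andbT.
Qed.

Lemma INR_expn m n : INR (expn m n) = (INR m ^ n)%R.
Proof.
elim: n => [|n IHn]; first by rewrite expn0.
by rewrite expnS -multE mult_INR IHn.
Qed.

Lemma Rpower_inv_INR_le (k C X : nat) :
  0 < k -> 0 < C -> k <= expn X C -> (Rpower (INR k) (/ INR C) <= INR X)%R.
Proof.
move=> k_gt0 C_gt0 le_k_XC.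
have X_gt0 : 0 < X by case: X le_k_XC => //; rewrite exp0n //; lia.
have [Rk_gt0 RX_gt0 RC_gt0] : [/\ (0 < INR k)%R, (0 < INR X)%R & (0 < INR C)%R].
  by split; apply: lt_0_INR; apply/ltP.
have le_Rk_XC : (INR k <= INR X ^ C)%R by rewrite -INR_expn; apply/le_INR/leP.
apply: Rle_trans (Rle_Rpower_l _ _ _ _ (conj Rk_gt0 le_Rk_XC)) _.
  exact/Rlt_le/Rinv_0_lt_compat.
rewrite -(Rpower_pow C (INR X) RX_gt0) Rpower_mult Rinv_r ?Rpower_1 //.
  exact: Rle_refl.
exact: Rgt_not_eq.
Qed.

Section Chains.

Variable k : nat.
Implicit Types (S W : {set {perm 'I_k}}) (w : {perm 'I_k}) (a b : 'I_k).

Definition before S a b : bool :=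
  [forall w in S, (w^-1)%g a < (w^-1)%g b].

Lemma before_chain_subseq S w t :
  w \in S -> sorted (before S) t -> subseq t (pword w).
Proof.
move=> wS sorted_t.
have sorted_pos : sorted (fun i j : 'I_k => i < j) (map (w^-1)%g t).
  rewrite sorted_map; apply: sub_sorted sorted_t => a b /forallP/(_ w).
  by rewrite wS.
have -> : t = map w (map (w^-1)%g t).
  by rewrite -map_comp map_id_in // => a _ /=; rewrite permKV.
exact: map_subseq (sorted_ltn_subseq_enum sorted_pos).
Qed.

Lemma size_before_chain S w t : w \in S -> sorted (before S) t -> size t <= k.
Proof.
move=> wS /(before_chain_subseq wS)/size_subseq.
by rewrite size_map size_enum_ord.
Qed.

Definition height S a : nat :=
  \max_(n < k | [exists t : n.-tuple 'I_k, sorted (before S) (rcons t a)]) n.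

Lemma height_chain S a :
  exists2 t : seq 'I_k, size t = height S a & sorted (before S) (rcons t a).
Proof.
pose chain_of_size n :=
  exists2 t : seq 'I_k, size t = n & sorted (before S) (rcons t a).
apply: (big_ind chain_of_size).
- by exists [::].
- by move=> m n hm hn; rewrite /maxn; case: ifP.
- by move=> n /existsP[t sorted_t]; exists (val t); rewrite ?size_tuple.
Qed.

Lemma leq_height S a t :
  size t < k -> sorted (before S) (rcons t a) -> size t <= height S a.
Proof.
move=> lt_tk sorted_t; apply: (leq_bigmax_cond (Ordinal lt_tk)).
by apply/existsP; exists (in_tuple t).
Qed.

Lemma height_lt_LCS S w a : w \in S -> height S a < LCS S.
Proof.
move=> wS; have [t size_t sorted_ta] := height_chain S a.
have := size_before_chain wS sorted_ta; rewrite size_rcons size_t => lt_hk.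
apply: (leq_bigmax_cond (Ordinal (lt_hk : (height S a).+1 < k.+1))).
have size_ta : size (rcons t a) == (height S a).+1 by rewrite size_rcons size_t.
apply/existsP; exists (Tuple size_ta); apply/forallP => w'; apply/implyP => w'S.
exact: before_chain_subseq w'S sorted_ta.
Qed.

Lemma height_lt S w a b : w \in S -> before S a b -> height S a < height S b.
Proof.
move=> wS lt_ab; have [t size_t sorted_ta] := height_chain S a.
have sorted_tab : sorted (before S) (rcons (rcons t a) b).
  case: t sorted_ta {size_t} => [|c t] /=; first by rewrite lt_ab.
  by move=> sorted_cta; rewrite rcons_path last_rcons sorted_cta lt_ab.
have := size_before_chain wS sorted_tab; rewrite !size_rcons size_t => lt_hk.
by have := leq_height (t := rcons t a); rewrite size_rcons size_t; apply.
Qed.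

Lemma exists_before_subset T W a b : #|W| = (2 * T).-1 -> a != b ->
  exists2 S : {set {perm 'I_k}},
    (S \subset W) && (#|S| == T) & before S a b || before S b a.
Proof.
move=> card_W neq_ab.
pose A := [set w : {perm 'I_k} | (w^-1)%g a < (w^-1)%g b].
have [S sub_S /orP[sub_SA | sub_SA']] := exists_subset_homogeneous A card_W.
  exists S => //; apply/orP; left; apply/forallP => w; apply/implyP => wS.
  by have := subsetP sub_SA w wS; rewrite inE.
exists S => //; apply/orP; right; apply/forallP => w; apply/implyP => wS.
have := subsetP sub_SA' w wS; rewrite !inE -leqNgt leq_eqVlt => /orP[|//].
by rewrite (inj_eq val_inj) (inj_eq (@perm_inj _ _)) eq_sym (negbTE neq_ab).
Qed.

Lemma leq_exp_LCS_T T W : 0 < T -> #|W| = (2 * T).-1 ->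
  k <= expn (LCS_T T W) 'C((2 * T).-1, T).
Proof.
move=> T_gt0 card_W.
pose D := [set S : {set {perm 'I_k}} | (S \subset W) && (#|S| == T)].
have card_D : #|D| = 'C((2 * T).-1, T) by rewrite cards_draws card_W.
have witness S : S \in D -> exists w, w \in S.
  rewrite inE => /andP[_ /eqP card_S].
  by apply/set0Pn; rewrite -card_gt0 card_S.
have height_lt_LCS_T (i : 'I_#|D|) a : height (enum_val i) a < LCS_T T W.
  have D_i : enum_val i \in D := enum_valP i.
  have [w wS] := witness _ D_i.
  apply: leq_trans (height_lt_LCS a wS) _.
  by apply: leq_bigmax_cond; rewrite inE in D_i.
pose profile a := [ffun i : 'I_#|D| => Ordinal (height_lt_LCS_T i a)].
suff profile_inj : injective profile.
  by have := leq_card profile profile_inj; rewrite card_ffun !card_ord card_D.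
move=> a b eq_ab; apply/eqP; apply/negPn/negP => neq_ab.
have [S D_S comparable_ab] := exists_before_subset card_W neq_ab.
have {}D_S : S \in D by rewrite inE.
have [w wS] := witness _ D_S.
have : height S a != height S b.
  case/orP: comparable_ab => /(height_lt wS); rewrite ltn_neqAle => /andP[] //.
  by rewrite eq_sym.
move/ffunP/(_ (enum_rank_in D_S S))/(congr1 val): eq_ab.
by rewrite !ffunE /= enum_rankK_in // => ->; rewrite eqxx.
Qed.

End Chains.

Lemma leq_exp_LCS_T_Pk k T : 0 < T ->
  k <= expn (LCS_T_Pk k T (2 * T).-1) 'C((2 * T).-1, T).
Proof.
move=> T_gt0; have C_gt0 : 0 < 'C((2 * T).-1, T) by rewrite bin_gt0; lia.
apply: (big_ind (fun n => k <= expn n 'C((2 * T).-1, T))).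
- by case: k => // k'; rewrite -{1}(expn1 k'.+1) leq_pexp2l.
- by move=> m n hm hn; rewrite /minn; case: ifP.
- by move=> W /eqP card_W; exact: leq_exp_LCS_T.
Qed.

Theorem theorem25 (T k : nat) (hT : (0 < T)%N) (hk : (0 < k)%N) :
  (Rpower (INR k) (/ INR 'C((2 * T).-1, T)) <= INR (LCS_T_Pk k T (2 * T).-1))%R.
Proof.
apply: Rpower_inv_INR_le => //; last exact: leq_exp_LCS_T_Pk.
by rewrite bin_gt0; lia.
Qed.
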